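(* Let $D,W,N_0,\zeta,P_A>0$ be fixed. For a product of channel gains $x=g h>0$ let $\gamma=\frac{\zeta P_A x}{WN_0}$, $\alpha=\mathbb{L}_0\!\left(\frac{\gamma-1}{e}\right)+1$ with $\mathbb{L}_0$ the principal Lambert W function, and $$\hat\tau_S(x)=\frac{D\ln2}{W\alpha},\qquad \hat\tau_0(x)=\frac{D\ln2}{W\alpha\gamma}\left(2^{\alpha/\ln2}-1\right),$$ i.e. the optimal information transmission and energy harvesting times of a single source with uplink gain $g$ and downlink gain $h$ transmitting $D$ bits directly to the AP when the maximum power constraint is inactive. Then $\hat\tau_S$ and $\hat\tau_0$ are decreasing functions of $x=gh$.
   Context: Single source wireless powered network: the source harvests energy $\zeta P_A h\tau_0$ from the AP during time $\tau_0$, then transmits $D$ bits during time $\tau_S$ to the AP over an AWGN channel with gain $g$, bandwidth $W$, noise spectral density $N_0$; the maximum transmit power is assumed large enough not to constrain the problem. *)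

From Stdlib Require Import Reals Lra ClassicalEpsilon.
Open Scope R_scope.

(* Principal branch of the Lambert W function: for y >= -1/e, the unique
   w >= -1 with w * exp w = y (chosen by Hilbert's epsilon; only used for
   arguments y > -1/e where it is well defined). *)
Definition LambertW0 (y : R) : R :=
  epsilon (inhabits 0) (fun w => -1 <= w /\ w * exp w = y).

Definition gammaW (zeta PA W N0 x : R) : R := zeta * PA * x / (W * N0).

Definition alphaW (zeta PA W N0 x : R) : R :=
  LambertW0 ((gammaW zeta PA W N0 x - 1) / exp 1) + 1.

Definition tauS_hat (D W zeta PA N0 x : R) : R :=
  D * ln 2 / (W * alphaW zeta PA W N0 x).

Definition tau0_hat (D W zeta PA N0 x : R) : R :=
  D * ln 2 / (W * alphaW zeta PA W N0 x * gammaW zeta PA W N0 x)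
  * (Rpower 2 (alphaW zeta PA W N0 x / ln 2) - 1).

(* Writing a := alphaW, the defining equation of the Lambert function turns
   into gamma = 1 + (a - 1) e^a, so a is an increasing function of gamma,
   hence of x, and a > 0.  This already gives the claim for tauS_hat.  Since
   2^(a / ln 2) = e^a, tau0_hat equals (D ln 2 / W) (e^a - 1) / (a (1 + (a - 1) e^a)),
   and the derivative of this ratio has numerator
   (1 - 2a) e^(2a) + (a^2 + 2a - 2) e^a + 1, which vanishes at 0 and has
   derivative a e^a (a + 4 - 4 e^a) < 0 on (0, +oo). *)
From Stdlib Require Import Reals Lra ClassicalEpsilon.
From Coquelicot Require Import Coquelicot.
Open Scope R_scope.

Lemma exp_neg1 : exp (-1) = / exp 1.
Proof. exact (exp_Ropp 1). Qed.

Lemma mul_exp_lt (u v : R) : -1 <= u -> u < v -> u * exp u < v * exp v.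
Proof.
  intros Hu Huv.
  destruct (MVT_cor2 (fun t => t * exp t) (fun t => (t + 1) * exp t) u v Huv)
    as [c [Hmvt Hc]].
  - intros c _. apply is_derive_Reals. auto_derive; [easy | ring].
  - assert (0 < (c + 1) * exp c) by (apply Rmult_lt_0_compat; [lra | apply exp_pos]).
    nra.
Qed.

Lemma mul_exp_surj (y : R) : -1 / exp 1 < y -> exists w, -1 <= w /\ w * exp w = y.
Proof.
  intros Hy.
  set (M := Rmax y 0 + 1).
  assert (HM : 1 <= M) by (unfold M; pose proof (Rmax_r y 0); lra).
  assert (HyM : y < M) by (unfold M; pose proof (Rmax_l y 0); lra).
  assert (EM : M <= M * exp M) by (pose proof (exp_ineq1_le M); nra).
  destruct (IVT (fun w => w * exp w - y) (-1) M) as [w [Hw Hwy]].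
  - intros w. reg.
  - lra.
  - rewrite exp_neg1. unfold Rdiv in Hy. lra.
  - lra.
  - exists w. split; lra.
Qed.

Lemma LambertW0_spec (y : R) : -1 / exp 1 < y ->
  -1 < LambertW0 y /\ LambertW0 y * exp (LambertW0 y) = y.
Proof.
  intros Hy.
  destruct (epsilon_spec (inhabits 0) (fun w => -1 <= w /\ w * exp w = y)
              (mul_exp_surj y Hy)) as [[Hlt | Heq] Hwy];
    fold (LambertW0 y) in *; split; auto.
  rewrite <- Heq, exp_neg1 in Hwy. unfold Rdiv in Hy. lra.
Qed.

Lemma LambertW0_lt (y1 y2 : R) :
  -1 / exp 1 < y1 -> y1 < y2 -> LambertW0 y1 < LambertW0 y2.
Proof.
  intros Hy1 Hy12.
  destruct (LambertW0_spec y1 Hy1) as [Hw1 Hwy1].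
  destruct (LambertW0_spec y2 ltac:(lra)) as [Hw2 Hwy2].
  destruct (Rlt_or_le (LambertW0 y1) (LambertW0 y2)) as [Hlt | [Hgt | Heq]]; auto.
  - pose proof (mul_exp_lt (LambertW0 y2) (LambertW0 y1) ltac:(lra) Hgt). lra.
  - rewrite Heq in Hwy2. lra.
Qed.

Lemma one_add_pred_mul_exp_pos (a : R) : a <> 0 -> 0 < 1 + (a - 1) * exp a.
Proof.
  intros Ha.
  pose proof (exp_ineq1 (- a) ltac:(lra)) as Hexp.
  rewrite exp_Ropp in Hexp.
  pose proof (exp_pos a).
  apply (Rmult_lt_compat_r (exp a)) in Hexp; [| easy].
  rewrite Rinv_l in Hexp; nra.
Qed.

Lemma ln2_pos : 0 < ln 2.
Proof. pose proof ln_lt_2. lra. Qed.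

Lemma Rpower_2_div_ln2 (a : R) : Rpower 2 (a / ln 2) = exp a.
Proof.
  unfold Rpower. f_equal. field.
  apply Rgt_not_eq, ln2_pos.
Qed.

Definition energy_ratio (a : R) : R := (exp a - 1) / (a * (1 + (a - 1) * exp a)).

Definition energy_ratio_deriv_num (a : R) : R :=
  (1 - 2 * a) * exp a * exp a + (a * a + 2 * a - 2) * exp a + 1.

Lemma energy_ratio_deriv_num_neg (a : R) : 0 < a -> energy_ratio_deriv_num a < 0.
Proof.
  intros Ha.
  destruct (MVT_cor2 energy_ratio_deriv_num
              (fun t => t * exp t * (t + 4 - 4 * exp t)) 0 a Ha) as [c [Hmvt Hc]].
  - intros c _. apply is_derive_Reals. unfold energy_ratio_deriv_num.
    auto_derive; [easy | ring].
  - assert (H0 : energy_ratio_deriv_num 0 = 0)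
      by (unfold energy_ratio_deriv_num; rewrite exp_0; ring).
    assert (c * exp c * (c + 4 - 4 * exp c) < 0).
    { pose proof (exp_ineq1 c ltac:(lra)). pose proof (exp_pos c).
      assert (0 < c * exp c) by nra. nra. }
    nra.
Qed.

Lemma energy_ratio_lt (a b : R) : 0 < a -> a < b -> energy_ratio b < energy_ratio a.
Proof.
  intros Ha Hab.
  set (den := fun t => t * (1 + (t - 1) * exp t)).
  assert (Hden : forall t, 0 < t -> 0 < den t).
  { intros t Ht. apply Rmult_lt_0_compat; [easy |].
    apply one_add_pred_mul_exp_pos. lra. }
  destruct (MVT_cor2 energy_ratio
              (fun t => energy_ratio_deriv_num t / (den t * den t)) a b Hab)
    as [c [Hmvt Hc]].
  - intros c Hc. apply is_derive_Reals.
    pose proof (one_add_pred_mul_exp_pos c ltac:(lra)).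
    unfold energy_ratio. auto_derive.
    + apply Rmult_integral_contrapositive; split; lra.
    + unfold energy_ratio_deriv_num, den. field. split; lra.
  - assert (energy_ratio_deriv_num c / (den c * den c) < 0).
    { pose proof (Hden c ltac:(lra)).
      apply Rmult_neg_pos; [apply energy_ratio_deriv_num_neg; lra |].
      apply Rinv_0_lt_compat. nra. }
    nra.
Qed.

Section OptimalTimes.

Variables D W N0 zeta PA : R.
Hypotheses (HD : 0 < D) (HW : 0 < W) (HN0 : 0 < N0) (Hzeta : 0 < zeta) (HPA : 0 < PA).

Lemma gammaW_pos (x : R) : 0 < x -> 0 < gammaW zeta PA W N0 x.
Proof.
  intros Hx. unfold gammaW.
  apply Rdiv_lt_0_compat; apply Rmult_lt_0_compat; try apply Rmult_lt_0_compat; lra.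
Qed.

Lemma gammaW_lt (x y : R) : x < y -> gammaW zeta PA W N0 x < gammaW zeta PA W N0 y.
Proof.
  intros Hxy. unfold gammaW, Rdiv.
  apply Rmult_lt_compat_r; [apply Rinv_0_lt_compat, Rmult_lt_0_compat; lra |].
  apply Rmult_lt_compat_l; [apply Rmult_lt_0_compat |]; lra.
Qed.

Lemma LambertW0_gamma_spec (x : R) : 0 < x ->
  let L := LambertW0 ((gammaW zeta PA W N0 x - 1) / exp 1) in
  -1 < L /\ L * exp L = (gammaW zeta PA W N0 x - 1) / exp 1.
Proof.
  intros Hx. apply LambertW0_spec.
  pose proof (gammaW_pos x Hx). pose proof (exp_pos 1).
  unfold Rdiv. apply Rmult_lt_compat_r; [apply Rinv_0_lt_compat |]; lra.
Qed.

Lemma alphaW_pos (x : R) : 0 < x -> 0 < alphaW zeta PA W N0 x.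
Proof.
  intros Hx. unfold alphaW. destruct (LambertW0_gamma_spec x Hx). lra.
Qed.

Lemma alphaW_lt (x y : R) : 0 < x -> x < y ->
  alphaW zeta PA W N0 x < alphaW zeta PA W N0 y.
Proof.
  intros Hx Hxy. unfold alphaW. apply Rplus_lt_compat_r.
  pose proof (gammaW_pos x Hx). pose proof (gammaW_lt x y Hxy). pose proof (exp_pos 1).
  apply LambertW0_lt; unfold Rdiv;
    apply Rmult_lt_compat_r; try apply Rinv_0_lt_compat; lra.
Qed.

Lemma gammaW_alphaW (x : R) : 0 < x ->
  gammaW zeta PA W N0 x =
  1 + (alphaW zeta PA W N0 x - 1) * exp (alphaW zeta PA W N0 x).
Proof.
  intros Hx. destruct (LambertW0_gamma_spec x Hx) as [_ HL].
  unfold alphaW.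
  set (L := LambertW0 _) in *.
  replace (L + 1 - 1) with L by ring.
  rewrite exp_plus, <- Rmult_assoc, HL.
  field. apply Rgt_not_eq, exp_pos.
Qed.

Lemma tau0_hat_energy_ratio (x : R) : 0 < x ->
  tau0_hat D W zeta PA N0 x = D * ln 2 / W * energy_ratio (alphaW zeta PA W N0 x).
Proof.
  intros Hx. unfold tau0_hat, energy_ratio.
  rewrite Rpower_2_div_ln2, (gammaW_alphaW x Hx).
  pose proof (alphaW_pos x Hx).
  pose proof (one_add_pred_mul_exp_pos (alphaW zeta PA W N0 x) ltac:(lra)).
  field. repeat split; lra.
Qed.

Lemma tauS_hat_lt (x y : R) : 0 < x -> x < y ->
  tauS_hat D W zeta PA N0 y < tauS_hat D W zeta PA N0 x.
Proof.
  intros Hx Hxy. unfold tauS_hat, Rdiv.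
  pose proof (alphaW_pos x Hx). pose proof (alphaW_lt x y Hx Hxy).
  pose proof ln2_pos.
  apply Rmult_lt_compat_l; [nra |].
  apply Rinv_lt_contravar; [apply Rmult_lt_0_compat; nra | nra].
Qed.

Lemma tau0_hat_lt (x y : R) : 0 < x -> x < y ->
  tau0_hat D W zeta PA N0 y < tau0_hat D W zeta PA N0 x.
Proof.
  intros Hx Hxy.
  rewrite (tau0_hat_energy_ratio x Hx), (tau0_hat_energy_ratio y ltac:(lra)).
  pose proof ln2_pos.
  apply Rmult_lt_compat_l.
  - apply Rdiv_lt_0_compat; nra.
  - apply energy_ratio_lt; [apply alphaW_pos | apply alphaW_lt]; easy.
Qed.

End OptimalTimes.

Theorem lemma6 (D W N0 zeta PA : R) :
  0 < D -> 0 < W -> 0 < N0 -> 0 < zeta -> 0 < PA ->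
  (forall x y : R, 0 < x -> x < y ->
     tauS_hat D W zeta PA N0 y < tauS_hat D W zeta PA N0 x) /\
  (forall x y : R, 0 < x -> x < y ->
     tau0_hat D W zeta PA N0 y < tau0_hat D W zeta PA N0 x).
Proof.
  intros HD HW HN0 Hzeta HPA. split.
  - exact (tauS_hat_lt D W N0 zeta PA HD HW HN0 Hzeta HPA).
  - exact (tau0_hat_lt D W N0 zeta PA HD HW HN0 Hzeta HPA).
Qed.
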